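(* Let $\mathcal G$ be a doubly connected molecular graph. Construct $\mathcal G_{new}$ from $\mathcal G$ as follows: add a new molecule $\mathcal M_{new}$; add a diffusive edge $b_1$ joining $\mathcal M_{new}$ and a molecule $\mathcal M_1$ of $\mathcal G$, and a blue solid edge $b_2$ joining $\mathcal M_{new}$ and a molecule $\mathcal M_2$ of $\mathcal G$; and replace a blue solid edge $b$ of $\mathcal G$ joining molecules $\mathcal M_3$ and $\mathcal M_4$ by two blue solid edges, $b_3$ joining $\mathcal M_3$ and $\mathcal M_{new}$ and $b_4$ joining $\mathcal M_4$ and $\mathcal M_{new}$. Then the blue solid edge $b_2$ is redundant in $\mathcal G_{new}$.
   Context: A molecular graph is a finite multigraph whose vertices are called molecules and each of whose edges joins two distinct molecules and is either a diffusive edge or a blue solid edge (parallel edges are allowed). A molecular graph is doubly connected if there exist two disjoint sets of edges, $\mathcal B_{black}$ consisting only of diffusive edges and $\mathcal B_{blue}$ consisting only of blue solid or diffusive edges, such that each of $\mathcal B_{black}$ and $\mathcal B_{blue}$ contains a spanning tree of the set of all molecules. A blue solid edge $e$ of a doubly connected graph is redundant if the graph obtained by deleting $e$ is still doubly connected. *)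

From mathcomp Require Import all_boot.
Set Implicit Arguments. Unset Strict Implicit. Unset Printing Implicit Defensive.

(* A molecular graph: a finite type V of molecules, a finite type E of edges
   (parallel edges allowed), endpoints [ends e] and a kind for each edge. *)
Inductive ekind := Diffusive | BlueSolid.
Definition ekind_eqb (a b : ekind) : bool :=
  match a, b with Diffusive, Diffusive | BlueSolid, BlueSolid => true | _, _ => false end.

Section Molecular.
Variables (V E : finType) (ends : E -> V * V) (kind : E -> ekind).

Definition molecular_graph : Prop := forall e, (ends e).1 <> (ends e).2.

Definition adj (B : {set E}) : rel V :=
  fun x y => [exists e in B, (ends e == (x, y)) || (ends e == (y, x))].

Definition connected_by (B : {set E}) : Prop := forall x y, connect (adj B) x y.

(* T is a spanning tree of the set of all molecules: connected, and minimally
   so (removing any edge of T disconnects it, i.e. T has no cycle). *)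
Definition spanning_tree (T : {set E}) : Prop :=
  connected_by T /\ forall e, e \in T -> ~ connected_by (T :\ e).

Definition contains_spanning_tree (B : {set E}) : Prop :=
  exists T : {set E}, T \subset B /\ spanning_tree T.

Definition doubly_connected : Prop :=
  exists Bblack Bblue : {set E},
    [/\ [disjoint Bblack & Bblue],
        (forall e, e \in Bblack -> kind e = Diffusive),
        (forall e, e \in Bblue -> kind e = BlueSolid \/ kind e = Diffusive),
        contains_spanning_tree Bblack & contains_spanning_tree Bblue].
End Molecular.

Definition del_ends (V E : finType) (ends : E -> V * V) (e : E)
  (x : {x : E | x != e}) : V * V := ends (val x).
Definition del_kind (E : finType) (kind : E -> ekind) (e : E)
  (x : {x : E | x != e}) : ekind := kind (val x).

Definition redundant (V E : finType) (ends : E -> V * V) (kind : E -> ekind) (e : E)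
  : Prop :=
  [/\ kind e = BlueSolid, doubly_connected ends kind &
      doubly_connected (del_ends ends (e:=e)) (del_kind kind (e:=e))].

(* The new graph G_new: molecules [option V] (None = M_new); edges are the old
   edges other than b, plus four new ones indexed by 'I_4:
   0 = b1 (diffusive, M_new -- M1), 1 = b2 (blue, M_new -- M2),
   2 = b3 (blue, M3 -- M_new), 3 = b4 (blue, M4 -- M_new),
   where (M3, M4) = ends b. *)
Definition new_edge (E : finType) (b : E) : finType :=
  ({x : E | x != b} + 'I_4)%type.

Definition new_ends (V E : finType) (ends : E -> V * V) (b : E) (M1 M2 : V)
  (x : new_edge b) : option V * option V :=
  match x with
  | inl y => (Some (ends (val y)).1, Some (ends (val y)).2)
  | inr i =>
      match val i with
      | 0 => (None, Some M1)
      | 1 => (None, Some M2)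
      | 2 => (Some (ends b).1, None)
      | _ => (Some (ends b).2, None)
      end
  end.

Definition new_kind (E : finType) (kind : E -> ekind) (b : E)
  (x : new_edge b) : ekind :=
  match x with
  | inl y => kind (val y)
  | inr i => if val i == 0 then Diffusive else BlueSolid
  end.

Definition b2_edge (E : finType) (b : E) : new_edge b := inr (@Ordinal 4 1 isT).

From mathcomp Require Import all_boot.
Set Implicit Arguments. Unset Strict Implicit. Unset Printing Implicit Defensive.

(* On a finite graph, an edge set contains a spanning tree iff it connects all
   molecules (a minimal connected subset is a tree), so double connectivity is
   about two disjoint connected edge sets and is preserved by adding edges.
   In G_new without b2, take the old black set plus b1, which reaches M_new
   from M1, and the old blue set with b replaced by the path b3 b4 through
   M_new; b is blue solid, so only the blue set can contain it. *)

Lemma homo_connect (T T' : finType) (e : rel T) (e' : rel T') (f : T -> T') :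
  {homo f : x y / e x y >-> connect e' x y} ->
  {homo f : x y / connect e x y >-> connect e' x y}.
Proof.
move=> fe x _ /connectP [p e_p ->]; elim: p x e_p => //= y p IHp x /andP [exy].
by move/IHp; apply: connect_trans; apply: fe.
Qed.

Section Connectivity.
Variables (V E : finType) (ends : E -> V * V).
Implicit Types (B : {set E}) (e : E).

Lemma adj_sym B : symmetric (adj ends B).
Proof. by move=> x y; apply: eq_existsb => e; rewrite orbC. Qed.

Lemma connect_adjC B x y : connect (adj ends B) x y = connect (adj ends B) y x.
Proof. exact: (sym_connect_sym (adj_sym B)). Qed.

Lemma adj_ends B e : e \in B -> adj ends B (ends e).1 (ends e).2.
Proof. by move=> eB; apply/existsP; exists e; rewrite eB -surjective_pairing eqxx. Qed.

Lemma subrel_adj B (r : rel V) : symmetric r ->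
  {in B, forall e, r (ends e).1 (ends e).2} -> subrel (adj ends B) r.
Proof.
move=> r_sym rB x y /existsP [e /andP [eB /orP [] /eqP ends_e]];
  have := rB e eB; by rewrite ends_e // r_sym.
Qed.

Lemma connected_by_root B r :
  (forall x, connect (adj ends B) r x) -> connected_by ends B.
Proof. by move=> conn_r x y; rewrite (connect_trans _ (conn_r y)) // connect_adjC. Qed.

Lemma connected_byP B :
  reflect (connected_by ends B) [forall x, forall y, connect (adj ends B) x y].
Proof.
apply: (iffP forallP) => [conn x y | conn x]; first exact: (forallP (conn x)).
by apply/forallP.
Qed.

Lemma contains_spanning_treeP B :
  contains_spanning_tree ends B <-> connected_by ends B.
Proof.
split=> [[T [sTB [conn_T _]]] x y | /connected_byP conn_B].
  apply: connect_sub (conn_T x y); apply: subrel_adj; first exact: connect_adjC.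
  by move=> e eT; apply/connect1/adj_ends; apply: (subsetP sTB).
pose connectedb (T : {set E}) := [forall x, forall y, connect (adj ends T) x y].
have [T /minsetP [/connected_byP conn_T min_T] sTB] :=
  minset_exists (P := connectedb) conn_B.
exists T; split=> //; split=> // e eT /connected_byP conn_Te.
by move/setP/(_ e): (min_T _ conn_Te (subD1set T e)); rewrite eT !inE eqxx.
Qed.

End Connectivity.

Lemma doubly_connected_inj (V E E' : finType) (ends : E -> V * V) (kind : E -> ekind)
    (ends' : E' -> V * V) (kind' : E' -> ekind) (h : E' -> E) :
  injective h -> (forall e, ends (h e) = ends' e) -> (forall e, kind (h e) = kind' e) ->
  doubly_connected ends' kind' -> doubly_connected ends kind.
Proof.
move=> h_inj ends_h kind_h [B1 [B2 [dis12 kind1 kind2 tree1 tree2]]].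
have conn_h B : contains_spanning_tree ends' B -> contains_spanning_tree ends (h @: B).
  move/contains_spanning_treeP => conn_B; apply/contains_spanning_treeP => x y.
  apply: connect_sub (conn_B x y); apply: subrel_adj; first exact: connect_adjC.
  by move=> e eB; rewrite -ends_h; apply/connect1/adj_ends/imset_f.
exists (h @: B1), (h @: B2); split; [| | | exact: conn_h | exact: conn_h].
- by rewrite imset_disjoint.
- by move=> _ /imsetP [e eB1 ->]; rewrite kind_h; apply: kind1.
- by move=> _ /imsetP [e eB2 ->]; rewrite kind_h; apply: kind2.
Qed.

Section NewGraph.
Variables (V E : finType) (ends : E -> V * V) (M1 M2 : V) (b : E).

Local Notation E' := {x : new_edge b | x != b2_edge b}.
Local Notation ends_new := (new_ends ends M1 M2 (b := b)).
Local Notation ends' := (del_ends ends_new (e := b2_edge b)).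

Definition lift_edges (B : {set E}) (I : pred nat) : {set E'} :=
  [set x : E' | match val x with inl y => val y \in B | inr i => I (val i) end].

Lemma connect_lift_old (B : {set E}) (I : pred nat) e : e \in B -> e != b ->
  connect (adj ends' (lift_edges B I)) (Some (ends e).1) (Some (ends e).2).
Proof.
move=> eB neb; apply: connect1.
by apply: (@adj_ends _ _ ends' _ (exist _ (inl (exist _ e neb)) isT)); rewrite inE.
Qed.

Lemma connect_lift_new (B : {set E}) (I : pred nat) (i : 'I_4)
    (ni1 : inr i != b2_edge b) :
  I i -> connect (adj ends' (lift_edges B I)) (ends_new (inr i)).1 (ends_new (inr i)).2.
Proof.
move=> Ii; apply: connect1.
by apply: (@adj_ends _ _ ends' _ (exist _ (inr i) ni1)); rewrite inE.
Qed.

Lemma connected_by_lift (B : {set E}) (S : {set E'}) u :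
  connected_by ends B ->
  {in B, forall e, connect (adj ends' S) (Some (ends e).1) (Some (ends e).2)} ->
  connect (adj ends' S) None (Some u) -> connected_by ends' S.
Proof.
move=> conn_B conn_edges conn_u; apply: (connected_by_root (r := None)) => -[v|].
  apply: connect_trans conn_u _; apply: (homo_connect (f := Some)) (conn_B u v).
  by apply: subrel_adj conn_edges => x y; apply: connect_adjC.
exact: connect0.
Qed.

Lemma connected_lift_black (B : {set E}) : b \notin B -> connected_by ends B ->
  connected_by ends' (lift_edges B (pred1 0)).
Proof.
move=> bB conn_B; apply: (connected_by_lift (u := M1) conn_B).
  by move=> e eB; apply: connect_lift_old => //; apply: contraNneq bB => <-.
exact: (@connect_lift_new B _ (Ordinal (isT : 0 < 4))).
Qed.

Lemma connected_lift_blue (B : {set E}) : connected_by ends B ->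
  connected_by ends' (lift_edges B [pred i | (i == 2) || (i == 3)]).
Proof.
move=> conn_B; set S := lift_edges _ _.
have conn3 : connect (adj ends' S) None (Some (ends b).1).
  by rewrite connect_adjC; exact: (@connect_lift_new B _ (Ordinal (isT : 2 < 4))).
have conn4 : connect (adj ends' S) None (Some (ends b).2).
  by rewrite connect_adjC; exact: (@connect_lift_new B _ (Ordinal (isT : 3 < 4))).
apply: (connected_by_lift conn_B _ conn3) => e eB.
have [->|neb] := eqVneq e b; last exact: connect_lift_old.
by rewrite connect_adjC in conn3; apply: connect_trans conn3 conn4.
Qed.

Lemma doubly_connected_del_b2 (kind : E -> ekind) :
  kind b = BlueSolid -> doubly_connected ends kind ->
  doubly_connected ends' (del_kind (new_kind kind (b := b)) (e := b2_edge b)).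
Proof.
move=> kind_b [B1 [B2 [dis12 kind1 kind2 tree1 tree2]]].
have bB1 : b \notin B1 by apply/negP => /kind1; rewrite kind_b.
exists (lift_edges B1 (pred1 0)), (lift_edges B2 [pred i | (i == 2) || (i == 3)]).
split.
- rewrite disjoints_subset; apply/subsetP => -[[y|[[|[|[|[|k]]]] ?]] ?]; rewrite !inE //=.
  by move/(disjointFr dis12) => ->.
- by move=> -[[y|[[|[|[|[|k]]]] ?]] ?]; rewrite inE //= => /kind1.
- move=> -[[y|[[|[|[|[|k]]]] ?]] ?]; rewrite inE //=;
    [exact: kind2 | by move=> _; left ..].
- exact/contains_spanning_treeP/connected_lift_black/contains_spanning_treeP.
- exact/contains_spanning_treeP/connected_lift_blue/contains_spanning_treeP.
Qed.

End NewGraph.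

Theorem claimA3 (V E : finType) (ends : E -> V * V) (kind : E -> ekind)
  (HG : molecular_graph ends) (Hdc : doubly_connected ends kind)
  (M1 M2 : V) (b : E) (Hb : kind b = BlueSolid) :
  redundant (new_ends ends M1 M2) (new_kind kind (b:=b)) (b2_edge b).
Proof.
have dc_del := doubly_connected_del_b2 M1 M2 Hb Hdc.
by split=> //; apply: (doubly_connected_inj val_inj _ _ dc_del).
Qed.
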